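(* Let $(Q,P)$ be a weakly quasi-lattice ordered group and let $\Lambda$ be a (not necessarily finitely aligned) $P$-graph with $\mathrm{FA}(\Lambda)\neq\emptyset$. For any $\mu\in\Lambda$ and finite $K\subseteq\mu\Lambda$, let $E=\mu\Lambda\setminus\bigcup_{\nu\in K}\nu\Lambda$. Then $\{x\in\mathcal{F}(\Lambda):\mu\in x,\ x\cap K=\emptyset\}=\hat E$, where $\hat E=\{x\in\mathcal{F}(\Lambda): x\cap\gamma\Lambda\subseteq E\text{ for some }\gamma\in x\}$.
   Context: $(Q,P)$ weakly quasi-lattice ordered: $Q$ a discrete group, $P\subseteq Q$ a subsemigroup containing the identity $e$ with $P\cap P^{-1}=\{e\}$, and, with $p\le r$ meaning $pq=r$ for some $q\in P$, any two elements of $P$ with a common upper bound have a least common upper bound. A $P$-graph is a countable small category $\Lambda$ (range/source $r,s$) with a functor $d:\Lambda\to P$ with unique factorisation (if $d(\lambda)=pq$ there are unique $\mu,\nu$ with $\lambda=\mu\nu$, $d(\mu)=p$, $d(\nu)=q$). Write $\lambda\Lambda=\{\lambda\mu: s(\lambda)=r(\mu)\}$, $\mu\preceq\lambda$ iff $\lambda\in\mu\Lambda$. $\mathrm{FA}(\Lambda)$ is the set of $\lambda$ such that for all $\mu\in\lambda\Lambda,\nu\in\Lambda$ there is finite $J\subseteq\Lambda$ with $\mu\Lambda\cap\nu\Lambda=\bigcup_{\kappa\in J}\kappa\Lambda$. A filter is a nonempty $x\subseteq\Lambda$ that is hereditary ($\lambda\preceq\mu\in x\Rightarrow\lambda\in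 x$) and directed ($\mu,\nu\in x$ implies some $\lambda\in x$ with $\mu,\nu\preceq\lambda$); $\mathcal{F}(\Lambda)$ is the set of filters. *)

From Stdlib Require Import List.
Import ListNotations.
Set Implicit Arguments.

Record group := Group {
  gcar :> Type;
  gmul : gcar -> gcar -> gcar;
  gone : gcar;
  ginv : gcar -> gcar;
  gmulA : forall a b c, gmul a (gmul b c) = gmul (gmul a b) c;
  gmul1l : forall a, gmul gone a = a;
  gmul1r : forall a, gmul a gone = a;
  gmulVl : forall a, gmul (ginv a) a = gone;
  gmulVr : forall a, gmul a (ginv a) = gone
}.

Definition Ple {Q : group} (P : Q -> Prop) (p r : Q) : Prop :=
  exists q, P q /\ gmul Q p q = r.

Definition WQLO (Q : group) (P : Q -> Prop) : Prop :=
  P (gone Q) /\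
  (forall p q, P p -> P q -> P (gmul Q p q)) /\
  (forall p, P p -> P (ginv Q p) -> p = gone Q) /\
  (forall p q, P p -> P q ->
     (exists r, P r /\ Ple (Q:=Q) P p r /\ Ple (Q:=Q) P q r) ->
     exists l, P l /\ Ple (Q:=Q) P p l /\ Ple (Q:=Q) P q l /\
       forall r, P r -> Ple (Q:=Q) P p r -> Ple (Q:=Q) P q r -> Ple (Q:=Q) P l r).

(** A P-graph: a countable small category (composition [comp a b] = ab is
    meaningful when [src a = rng b]) with a degree functor into P
    satisfying unique factorisation. *)
Record Pgraph (Q : group) (P : Q -> Prop) := PGraph {
  Obj : Type;
  Mor : Type;
  rng : Mor -> Obj;
  src : Mor -> Obj;
  idm : Obj -> Mor;
  comp : Mor -> Mor -> Mor;
  rng_id : forall v, rng (idm v) = v;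
  src_id : forall v, src (idm v) = v;
  rng_comp : forall a b, src a = rng b -> rng (comp a b) = rng a;
  src_comp : forall a b, src a = rng b -> src (comp a b) = src b;
  comp_idl : forall a, comp (idm (rng a)) a = a;
  comp_idr : forall a, comp a (idm (src a)) = a;
  compA : forall a b c, src a = rng b -> src b = rng c ->
            comp a (comp b c) = comp (comp a b) c;
  Obj_countable : exists f : Obj -> nat, forall u v, f u = f v -> u = v;
  Mor_countable : exists f : Mor -> nat, forall a b, f a = f b -> a = b;
  deg : Mor -> Q;
  deg_P : forall a, P (deg a);
  deg_id : forall v, deg (idm v) = gone Q;
  deg_comp : forall a b, src a = rng b -> deg (comp a b) = gmul Q (deg a) (deg b);
  unique_fact : forall l p q, P p -> P q -> deg l = gmul Q p q ->
    exists m n, (src m = rng n /\ l = comp m n /\ deg m = p /\ deg n = q) /\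
      forall m' n', src m' = rng n' -> l = comp m' n' -> deg m' = p -> deg n' = q ->
        m' = m /\ n' = n
}.

Arguments rng {Q P p0}.
Arguments src {Q P p0}.
Arguments idm {Q P p0}.
Arguments comp {Q P p0}.
Arguments deg {Q P p0}.

Section PgraphDefs.
Variables (Q : group) (P : Q -> Prop) (L : Pgraph Q P).

Definition ext (l a : Mor L) : Prop :=
  exists m, src l = rng m /\ a = comp l m.

Definition prec (m l : Mor L) : Prop := ext m l.

Definition FA (l : Mor L) : Prop :=
  forall m n, ext l m ->
    exists J : list (Mor L),
      forall a, (ext m a /\ ext n a) <-> exists k, In k J /\ ext k a.

Definition is_filter (x : Mor L -> Prop) : Prop :=
  (exists l, x l) /\
  (forall l m, prec l m -> x m -> x l) /\
  (forall m n, x m -> x n -> exists l, x l /\ prec m l /\ prec n l).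

Definition hat (E : Mor L -> Prop) (x : Mor L -> Prop) : Prop :=
  is_filter x /\ exists g, x g /\ forall a, x a -> ext g a -> E a.

End PgraphDefs.

(* Forward: take gamma = mu; a filter containing no element of K cannot contain
   an extension of one, by heredity.  Backward: gamma lies in E, hence in
   mu Lambda, so mu is in x by heredity; and if some nu in K were in x, a common
   upper bound of gamma and nu in x would lie both in E and in nu Lambda. *)
From Stdlib Require Import List.

Section Filters.
Context {Q : group} {P : Q -> Prop} {L : Pgraph Q P}.

Lemma ext_refl (a : Mor L) : ext L a a.
Proof.
  exists (idm (src a)). split.
  - symmetry. apply rng_id.
  - symmetry. apply comp_idr.
Qed.

Lemma filter_mem_of_ext {x : Mor L -> Prop} {l a : Mor L} :
  is_filter L x -> x a -> ext L l a -> x l.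
Proof. intros [_ [Hher _]] Ha Hla. exact (Hher l a Hla Ha). Qed.

Lemma hat_subset_ext {E : Mor L -> Prop} {mu : Mor L} {x : Mor L -> Prop} :
  (forall a, E a -> ext L mu a) -> hat L E x -> x mu.
Proof.
  intros HEmu [Hf [g [Hg HE]]].
  apply (filter_mem_of_ext Hf Hg), HEmu, HE; [exact Hg | apply ext_refl].
Qed.

Lemma hat_disjoint_ext {E : Mor L -> Prop} {n : Mor L} {x : Mor L -> Prop} :
  (forall a, E a -> ~ ext L n a) -> hat L E x -> ~ x n.
Proof.
  intros HEn [[_ [_ Hdir]] [g [Hg HE]]] Hn.
  destruct (Hdir g n Hg Hn) as [l [Hl [Hgl Hnl]]].
  exact (HEn l (HE l Hl Hgl) Hnl).
Qed.

Lemma hat_ext_minus_exts {N : Mor L -> Prop} {mu : Mor L} {x : Mor L -> Prop} :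
  is_filter L x -> x mu -> (forall n, N n -> ~ x n) ->
  hat L (fun a => ext L mu a /\ ~ (exists n, N n /\ ext L n a)) x.
Proof.
  intros Hf Hmu HN. split; [exact Hf |].
  exists mu. split; [exact Hmu |].
  intros a Ha Hmua. split; [exact Hmua |].
  intros [n [Hn Hna]]. exact (HN n Hn (filter_mem_of_ext Hf Ha Hna)).
Qed.

End Filters.

Theorem lemma6p4 (Q : group) (P : Q -> Prop) (L : Pgraph Q P) :
  WQLO Q P ->
  (exists l, FA L l) ->
  forall (mu : Mor L) (K : list (Mor L)),
    (forall n, In n K -> ext L mu n) ->
    let E := fun a => ext L mu a /\ ~ (exists n, In n K /\ ext L n a) in
    forall x : Mor L -> Prop,
      (is_filter L x /\ x mu /\ (forall n, In n K -> ~ x n)) <-> hat L E x.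
Proof.
  intros _ _ mu K _ E x. split.
  - intros [Hf [Hmu HK]]. exact (hat_ext_minus_exts Hf Hmu HK).
  - intros Hhat. split; [exact (proj1 Hhat) |]. split.
    + apply (hat_subset_ext (E := E)); [intros a [Ha _]; exact Ha | exact Hhat].
    + intros n Hn. apply (hat_disjoint_ext (E := E)); [| exact Hhat].
      intros a [_ Hno] Hna. exact (Hno (ex_intro _ n (conj Hn Hna))).
Qed.
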